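(* Let $(a,b)$ be a real interval and let $W$ be a weight matrix of size $N$ on $(a,b)$ (in the sense of the context; finite moments are not required). Let $\{F_n\}_{n\ge0}$ be a sequence of matrix orthogonal functions of size $N$ on $(a,b)$ with respect to $W$. Assume that for all $x\in(a,b)$ and all $n\ge0$ $$xF_n(x)=A_nF_{n-1}(x)+B_nF_n(x)+C_nF_{n+1}(x),$$ where $A_n,B_n,C_n\in M_N(\mathbb C)$ are constant matrices, $A_0=0$ (so the term with $F_{-1}$ is absent) and every $C_n$ is nonsingular. Then: (i) for every $n\ge0$ there is a uniquely determined matrix polynomial $Q_n\in M_N(\mathbb C)[x]$ with $F_n(x)=Q_n(x)F_0(x)$ on $(a,b)$; moreover $\deg Q_n=n$ and the leading coefficient of $Q_n$ is nonsingular; (ii) $W'=F_0WF_0^*$ has all moments $\int_a^b x^kW'(x)\,dx$, $k\ge0$, finite; (iii) $\{Q_n\}_{n\ge0}$ is a sequence of matrix orthogonal polynomials with respect to $W'$, i.e. $\int_a^bQ_i(x)W'(x)Q_j(x)^*\,dx=0$ for $i\neq j$; (iv) $xQ_n=A_nQ_{n-1}+B_nQ_n+C_nQ_{n+1}$ for all $n\ge0$ (with $A_0=0$).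
   Context: For $M\in M_N(\mathbb C)$, $M^*$ denotes the conjugate transpose. A weight matrix of size $N$ on $(a,b)$ (here without requiring finite moments) is an integrable function $W$ on $(a,b)$ (supported in $[a,b]$) such that $W(x)$ is a self-adjoint positive semidefinite $N\times N$ matrix for every $x\in(a,b)$ and positive definite for almost every $x$. A sequence of matrix orthogonal functions with respect to $W$ is a sequence $\{F_n\}_{n\ge0}$ of $M_N(\mathbb C)$-valued functions on $(a,b)$ such that $\det F_0(x)\neq0$ for almost every $x\in(a,b)$, $F_i(x)W(x)F_j(x)^*$ is integrable on $[a,b]$ for all $i,j\ge0$, and $\int_a^bF_i(x)W(x)F_j(x)^*\,dx=0$ for all $i\neq j$. A sequence of matrix orthogonal polynomials with respect to a weight $W'$ is a sequence $\{Q_n\}$ of matrix polynomials with $\deg Q_n=n$, nonsingular leading coefficient, and $\int_a^b Q_iW'Q_j^*\,dx=0$ for $i\ne j$. *)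

From HB Require Import structures.
From mathcomp Require Import all_boot all_order all_algebra.
From mathcomp Require Import all_classical all_reals all_analysis.
From mathcomp Require Import complex.
Set Implicit Arguments. Unset Strict Implicit. Unset Printing Implicit Defensive.
Import Order.TTheory GRing.Theory Num.Theory.
Local Open Scope classical_set_scope.
Local Open Scope ring_scope.

Section Defs.
Variable R : realType.
Local Notation C := R[i].
Local Notation mu := (@lebesgue_measure R).

Definition oitv (a b : \bar R) : set R := [set x : R | (a < x%:E < b)%E].

Definition adj (m n : nat) (M : 'M[C]_(m, n)) : 'M[C]_(n, m) :=
  (map_mx (@conjc R) M)^T.

Definition cintegrable (D : set R) (f : R -> C) : Prop :=
  mu.-integrable D (EFin \o (fun x => complex.Re (f x))) /\
  mu.-integrable D (EFin \o (fun x => complex.Im (f x))).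

Definition cintegral (D : set R) (f : R -> C) : C :=
  Complex (Rintegral mu D (fun x => complex.Re (f x)))
          (Rintegral mu D (fun x => complex.Im (f x))).

Definition mx_integrable (m n : nat) (D : set R) (F : R -> 'M[C]_(m, n)) : Prop :=
  forall i j, cintegrable D (fun x => F x i j).

Definition mx_integral (m n : nat) (D : set R) (F : R -> 'M[C]_(m, n))
  : 'M[C]_(m, n) := \matrix_(i, j) cintegral D (fun x => F x i j).

Definition selfadj (n : nat) (M : 'M[C]_n) := adj M = M.

Definition psd (n : nat) (M : 'M[C]_n) : Prop :=
  selfadj M /\ forall v : 'cV[C]_n, 0 <= (adj v *m M *m v) 0 0.

Definition posdef (n : nat) (M : 'M[C]_n) : Prop :=
  selfadj M /\ forall v : 'cV[C]_n, v != 0 -> 0 < (adj v *m M *m v) 0 0.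

Definition weight_matrix (N : nat) (a b : \bar R) (W : R -> 'M[C]_N) : Prop :=
  [/\ mx_integrable (oitv a b) W,
      (forall x, oitv a b x -> psd (W x)) &
      {ae mu, forall x, oitv a b x -> posdef (W x)}].

Definition finite_moments (N : nat) (a b : \bar R) (W : R -> 'M[C]_N) : Prop :=
  forall k : nat, mx_integrable (oitv a b) (fun x => (x%:C)%C ^+ k *: W x).

Definition mx_orth_funs (N : nat) (a b : \bar R) (W : R -> 'M[C]_N)
  (F : nat -> R -> 'M[C]_N) : Prop :=
  [/\ {ae mu, forall x, oitv a b x -> \det (F 0%N x) != 0},
      (forall i j, mx_integrable (oitv a b) (fun x => F i x *m W x *m adj (F j x))) &
      (forall i j, i <> j ->
         mx_integral (oitv a b) (fun x => F i x *m W x *m adj (F j x)) = 0)].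

Definition mxpeval (N : nat) (P : {poly 'M[C]_N.+1}) (x : R) : 'M[C]_N.+1 :=
  P.[((x%:C)%C)%:M].

Definition mx_orth_polys (N : nat) (a b : \bar R) (W : R -> 'M[C]_N.+1)
  (Q : nat -> {poly 'M[C]_N.+1}) : Prop :=
  [/\ (forall n, size (Q n) = n.+1),
      (forall n, lead_coef (Q n) \in unitmx),
      (forall i j, mx_integrable (oitv a b)
          (fun x => mxpeval (Q i) x *m W x *m adj (mxpeval (Q j) x))) &
      (forall i j, i <> j -> mx_integral (oitv a b)
          (fun x => mxpeval (Q i) x *m W x *m adj (mxpeval (Q j) x)) = 0)].

End Defs.

From HB Require Import structures.
From mathcomp Require Import all_boot all_order all_algebra.
From mathcomp Require Import all_classical all_reals all_analysis.
From mathcomp Require Import finmap complex.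
From mathcomp Require Import lra.
Import Order.TTheory GRing.Theory Num.Theory.
Local Open Scope classical_set_scope.
Local Open Scope ring_scope.

(* Since every C_n is invertible, the recurrence can be solved for F_(n+1); the
   matrix polynomials Q_n produced by the same recurrence from Q_0 = 1 thus satisfy
   F_n = Q_n F_0 by induction, and have degree n with invertible leading
   coefficient C_(n-1)^-1 ... C_0^-1.  Q_n is unique because F_0 is invertible
   almost everywhere on (a, b), hence at infinitely many points, and a matrix
   polynomial vanishing at infinitely many scalars is zero.  Multiplication by x
   preserves the left matrix span of the F_j, so x^k F_0 W F_0^* is a matrix
   combination of the integrable F_j W F_0^*: all moments of W' are finite.
   Finally Q_i W' Q_j^* = F_i W F_j^*, so orthogonality carries over. *)

Section ComplexIntegrable.
Variables (R : realType) (D : set R).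
Hypothesis mD : measurable (D : set (measurableTypeR R)).
Implicit Types f g : R -> R[i].

Lemma eq_cintegrable {f g} : {in D, f =1 g} -> cintegrable D f -> cintegrable D g.
Proof.
by move=> fg [fRe fIm]; split; [move: fRe | move: fIm];
  apply: eq_integrable => // x /fg /= ->.
Qed.

Lemma cintegrable0 : cintegrable D (fun=> 0).
Proof. by split; apply: (eq_integrable mD _ _ _ (integrable0 _ _)). Qed.

Lemma cintegrableD {f g} : cintegrable D f -> cintegrable D g ->
  cintegrable D (fun x => f x + g x).
Proof.
move=> [fRe fIm] [gRe gIm]; split.
- apply: (eq_integrable mD _ _ _ (integrableD mD fRe gRe)).
  by move=> x _ /=; case: (f x); case: (g x).
- apply: (eq_integrable mD _ _ _ (integrableD mD fIm gIm)).
  by move=> x _ /=; case: (f x); case: (g x).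
Qed.

Lemma cintegrableZl (c : R[i]) {f} : cintegrable D f ->
  cintegrable D (fun x => c * f x).
Proof.
case: c => p q [fRe fIm]; split.
- have := integrableB mD (integrableZl mD p fRe) (integrableZl mD q fIm).
  apply: (eq_integrable mD).
  by move=> x _ /=; case: (f x) => r s /=; rewrite -!EFinM -EFinB.
- have := integrableD mD (integrableZl mD p fIm) (integrableZl mD q fRe).
  apply: (eq_integrable mD).
  by move=> x _ /=; case: (f x) => r s /=; rewrite -!EFinM -EFinD.
Qed.

Lemma cintegrable_sum {I : Type} (r : seq I) {h : I -> R -> R[i]} :
  (forall i, cintegrable D (h i)) -> cintegrable D (fun x => \sum_(i <- r) h i x).
Proof.
move=> hi; elim: r => [|i r IHr].
  by apply: (eq_cintegrable _ cintegrable0) => x _; rewrite big_nil.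
by apply: (eq_cintegrable _ (cintegrableD (hi i) IHr)) => x _; rewrite big_cons.
Qed.

Variable n : nat.
Implicit Types G H : R -> 'M[R[i]]_n.

Lemma eq_mx_integrable {G H} : {in D, G =1 H} -> mx_integrable D G -> mx_integrable D H.
Proof. by move=> GH iG i j; apply: (eq_cintegrable _ (iG i j)) => x /GH ->. Qed.

Lemma mx_integrableD {G H} : mx_integrable D G -> mx_integrable D H ->
  mx_integrable D (fun x => G x + H x).
Proof.
move=> iG iH i j; apply: (eq_cintegrable _ (cintegrableD (iG i j) (iH i j))).
by move=> x _; rewrite mxE.
Qed.

Lemma mx_integrableMl (M : 'M[R[i]]_n) {G} : mx_integrable D G ->
  mx_integrable D (fun x => M *m G x).
Proof.
move=> iG i j.
have := cintegrable_sum (index_enum 'I_n) (fun k => cintegrableZl (M i k) (iG k j)).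
by apply: eq_cintegrable => x _; rewrite mxE.
Qed.

Lemma eq_mx_integral {G H} : {in D, G =1 H} -> mx_integral D G = mx_integral D H.
Proof.
move=> GH; apply/matrixP => i j; rewrite !mxE /cintegral.
by congr Complex; apply: eq_Rintegral => x /GH ->.
Qed.

End ComplexIntegrable.
Arguments eq_mx_integrable {R D} mD {n G H}.
Arguments mx_integrableD {R D} mD {n G H}.
Arguments mx_integrableMl {R D} mD {n} M {G}.
Arguments eq_mx_integral {R D n G H}.

Section Adjoint.
Variable R : realType.

Lemma adjM m n p (M : 'M[R[i]]_(m, n)) (P : 'M[R[i]]_(n, p)) :
  adj (M *m P) = adj P *m adj M.
Proof. by rewrite /adj map_mxM trmx_mul. Qed.

Lemma adjK m n (M : 'M[R[i]]_(m, n)) : adj (adj M) = M.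
Proof.
by apply/matrixP => i j; rewrite /adj map_trmx trmxK !mxE conjcK.
Qed.

Lemma unitmx_adj n (M : 'M[R[i]]_n) : (adj M \in unitmx) = (M \in unitmx).
Proof. by rewrite !unitmxE /adj det_tr det_map_mx !unitfE conjc_eq0. Qed.

Lemma psd_congr n (M W : 'M[R[i]]_n) : psd W -> psd (M *m W *m adj M).
Proof.
move=> [sW pW]; split; first by rewrite /selfadj !adjM adjK sW mulmxA.
by move=> v; have := pW (adj M *m v); rewrite adjM adjK !mulmxA.
Qed.

Lemma posdef_congr n (M W : 'M[R[i]]_n) : M \in unitmx ->
  posdef W -> posdef (M *m W *m adj M).
Proof.
move=> uM [sW pW]; split; first by rewrite /selfadj !adjM adjK sW mulmxA.
move=> v v0; have := pW (adj M *m v); rewrite adjM adjK !mulmxA; apply.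
apply: contra v0 => /eqP Mv0; apply/eqP.
by rewrite -(mulKmx (_ : adj M \in unitmx) v) ?Mv0 ?mulmx0 // unitmx_adj.
Qed.

End Adjoint.
Arguments psd_congr {R n} M {W}.
Arguments posdef_congr {R n M W}.

Section RecurrencePolynomials.
Variables (T : unitRingType) (A B C : nat -> T).
Hypothesis C_unit : forall n, C n \is a GRing.unit.

Definition rec_step n (p q : {poly T}) : {poly T} :=
  (C n)^-1%:P * ('X * q - (A n)%:P * p - (B n)%:P * q).

(* [rec_poly_pair n] is [(rec_poly n, rec_poly n.+1)]; at [n = 0] the term with
   [rec_poly n.-1] uses [rec_poly 0], as [0.-1 = 0] dictates. *)
Fixpoint rec_poly_pair n : {poly T} * {poly T} :=
  if n is m.+1 then
    let Qm := rec_poly_pair m in (Qm.2, rec_step m.+1 Qm.1 Qm.2)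
  else (1, rec_step 0 1 1).

Definition rec_poly n := (rec_poly_pair n).1.

Lemma rec_poly0 : rec_poly 0 = 1. Proof. by []. Qed.

Lemma rec_polyS n : rec_poly n.+1 = rec_step n (rec_poly n.-1) (rec_poly n).
Proof. by case: n. Qed.

Lemma rec_poly_recurrence n :
  'X * rec_poly n =
  (A n)%:P * rec_poly n.-1 + (B n)%:P * rec_poly n + (C n)%:P * rec_poly n.+1.
Proof.
rewrite rec_polyS /rec_step mulrA -polyCM mulrV // mul1r.
by rewrite addrC [X in _ + X]addrC addrA !subrK.
Qed.

Section RecStep.
Variables (n : nat) (p q : {poly T}).
Hypotheses (q_neq0 : q != 0) (size_pq : (size p <= size q)%N).

Let size_Xq : size ('X * q) = (size q).+1.
Proof. by rewrite -commr_polyX size_mulX. Qed.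

Let numer_size_lead : (size ('X * q - (A n)%:P * p - (B n)%:P * q) = (size q).+1)
  /\ lead_coef ('X * q - (A n)%:P * p - (B n)%:P * q) = lead_coef q.
Proof.
have sAp : (size (- ((A n)%:P * p))%R < size ('X * q)%R)%N.
  by rewrite size_polyN size_Xq mul_polyC ltnS (leq_trans (size_scale_leq _ _)).
have sBq : (size (- ((B n)%:P * q))%R < size ('X * q - (A n)%:P * p)%R)%N.
  by rewrite size_polyN size_polyDl // size_Xq mul_polyC ltnS size_scale_leq.
rewrite size_polyDl // size_polyDl // size_Xq; split => //.
by rewrite lead_coefDl // lead_coefDl // -commr_polyX lead_coefMX.
Qed.

Let lreg_Cinv : GRing.lreg (C n)^-1.
Proof. by apply/mulrI; rewrite unitrV. Qed.

Lemma size_rec_step : size (rec_step n p q) = (size q).+1.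
Proof. by rewrite /rec_step mul_polyC lreg_size // numer_size_lead.1. Qed.

Lemma lead_coef_rec_step : lead_coef (rec_step n p q) = (C n)^-1 * lead_coef q.
Proof. by rewrite /rec_step mul_polyC lead_coef_lreg // numer_size_lead.2. Qed.

End RecStep.

Lemma size_rec_poly n : size (rec_poly n) = n.+1.
Proof.
elim/ltn_ind: n => -[|m IH]; first by rewrite rec_poly0 size_poly1.
have size_m := IH m (ltnSn m).
rewrite rec_polyS size_rec_step ?size_m // -?size_poly_eq0 ?size_m //.
by case: m IH {size_m} => [|m] IH /=; rewrite ?rec_poly0 ?size_poly1 // IH.
Qed.

Lemma lead_coef_rec_poly_unit n : lead_coef (rec_poly n) \is a GRing.unit.
Proof.
elim: n => [|n IH]; first by rewrite rec_poly0 lead_coef1 unitr1.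
rewrite rec_polyS lead_coef_rec_step ?unitrMl ?unitrV //.
  by rewrite -size_poly_eq0 size_rec_poly.
by rewrite !size_rec_poly ltnS leq_pred.
Qed.

End RecurrencePolynomials.
Arguments rec_step {T}.
Arguments rec_poly {T}.
Arguments size_rec_poly {T A B C} C_unit n.
Arguments lead_coef_rec_poly_unit {T A B C} C_unit n.
Arguments rec_poly_recurrence {T A B C} C_unit n.

Section MatrixPolynomialEvaluation.
Variables (R : realType) (N : nat).
Local Notation M := 'M[R[i]]_N.+1.

Lemma mxpeval1 x : mxpeval (1 : {poly M}) x = 1.
Proof. by rewrite /mxpeval hornerC. Qed.

Lemma mxpeval_rec_step (A B C : nat -> M) n p q x :
  mxpeval (rec_step A B C n p q) x =
  (C n)^-1 *m ((x%:C)%C *: mxpeval q x - A n *m mxpeval p x - B n *m mxpeval q x).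
Proof.
rewrite /mxpeval /rec_step hornerCM !hornerD !hornerN !hornerCM.
by rewrite -commr_polyX hornerMX -mulmxE mul_mx_scalar.
Qed.

Lemma mxpeval_entry (P : {poly M}) x i j :
  mxpeval P x i j = (\poly_(k < size P) P`_k i j).[(x%:C)%C].
Proof.
rewrite /mxpeval horner_coef (horner_coef_wide _ (size_poly _ _)) summxE.
apply: eq_bigr => k _; rewrite coef_poly ltn_ord.
by rewrite -rmorphXn -mulmxE mul_mx_scalar mxE mulrC.
Qed.

Lemma mxpoly_eq_on_infinite (G : set R) (P Q : {poly M}) : infinite_set G ->
  (forall x, G x -> mxpeval P x = mxpeval Q x) -> P = Q.
Proof.
move=> infG PQ; apply/eqP; rewrite -subr_eq0; apply/eqP; set D := P - Q.
have D0 x : G x -> mxpeval D x = 0.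
  by move=> Gx; rewrite /mxpeval hornerD hornerN -!/(mxpeval _ x) PQ // subrr.
have [S SG sizeS] := infinite_set_fset (size D) infG.
apply/polyP => k; apply/matrixP => i j; rewrite coef0 mxE.
have Dij0 : \poly_(k < size D) D`_k i j = 0.
  apply: (@roots_geq_poly_eq0 _ _ [seq (x%:C)%C | x <- S]).
  - by apply/allP => _ /mapP[x xS ->]; rewrite /root -mxpeval_entry D0 ?mxE //; apply: SG.
  - by rewrite map_inj_uniq ?fset_uniq // => u v [].
  - by rewrite size_map (leq_trans (size_poly _ _)).
have := congr1 (fun p : {poly R[i]} => p`_k) Dij0.
by rewrite coef_poly coef0; case: ltnP => // kD _; rewrite nth_default // mxE.
Qed.

End MatrixPolynomialEvaluation.
Arguments mxpoly_eq_on_infinite {R N G P Q}.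

Section LebesgueOnIntervals.
Variable R : realType.
Local Notation mu := (@lebesgue_measure R).

Lemma measurable_oitv (a b : \bar R) : measurable (oitv a b : set (measurableTypeR R)).
Proof.
have := measurable_realfun.EFin_measurable measurableT
  (measurable_realfun.emeasurable_itv (Interval (BRight a) (BLeft b))).
by rewrite setTI; congr measurable; apply/seteqP; split => x /=; rewrite in_itv.
Qed.

Lemma oitv_subitv (a b : \bar R) : (a < b)%E ->
  exists c d : R, c < d /\ `]c, d[ `<=` oitv a b.
Proof.
move=> ab.
suff [c [d [ac cd db]]] : exists c d : R, [/\ (a < c%:E)%E, c < d & (d%:E < b)%E].
  exists c, d; split => // x /=; rewrite in_itv /= => /andP[cx xd].
  by rewrite /oitv /= (lt_trans ac) ?(lt_trans _ db) ?lte_fin.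
case: a b ab => [r| |] [s| |] //= ab.
- exists ((2 * r + s) / 3), ((r + 2 * s) / 3); rewrite !lte_fin in ab *; split; lra.
- by exists (r + 1), (r + 2); rewrite !lte_fin; split; [lra|lra|exact: ltry].
- by exists (s - 2), (s - 1); rewrite !lte_fin; split; [exact: ltNyr|lra|lra].
- by exists 0, 1; split; [exact: ltNyr|lra|exact: ltry].
Qed.

Lemma oitv_not_negligible (a b : \bar R) : (a < b)%E -> ~ mu.-negligible (oitv a b).
Proof.
move=> /oitv_subitv[c [d [cd cd_ab]]] ab_null.
have mcd : measurable (`]c, d[ : set (measurableTypeR R)) by exact: measurable_itv.
have := measure_negligible mcd (@negligibleS _ _ _ mu _ _ cd_ab ab_null).
change (mu ([set` `]c, d[] : set R) = 0 -> False).
rewrite lebesgue_measure_itv /= lte_fin cd.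
by move=> /eqP; rewrite -EFinB eqe subr_eq0 gt_eqF.
Qed.

Lemma finite_negligible (s : seq R) : mu.-negligible [set` s].
Proof.
have cs : countable [set` s] := finite_set_countable (finite_seq s).
apply/negligibleP; last exact: countable_lebesgue_measure0.
by apply: countable_measurable cs => t; exact: measurable_set1.
Qed.

Lemma ae_oitv_infinite (a b : \bar R) (P : set R) : (a < b)%E ->
  {ae mu, forall x, oitv a b x -> P x} -> infinite_set (oitv a b `&` P).
Proof.
move=> ab aeP /finite_seqP[s sE].
have cover : oitv a b `<=` ~` [set x | oitv a b x -> P x] `|` [set` s].
  move=> x abx; have [Px | nPx] := pselect (P x); last by left => /(_ abx).
  by right; rewrite -sE.
exact: (oitv_not_negligible _ _ ab (@negligibleS _ _ _ mu _ _ cover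
  (negligibleU aeP (finite_negligible s)))).
Qed.

End LebesgueOnIntervals.
Arguments measurable_oitv {R}.
Arguments ae_oitv_infinite {R a b} P.

Section LeftSpan.
Variables (R : realType) (n : nat) (D : set R) (F : nat -> R -> 'M[R[i]]_n).

Inductive lspan : (R -> 'M[R[i]]_n) -> Prop :=
| lspan_gen j : lspan (F j)
| lspan_add G H : lspan G -> lspan H -> lspan (fun x => G x + H x)
| lspan_mul M G : lspan G -> lspan (fun x => M *m G x)
| lspan_eq G H : {in D, G =1 H} -> lspan G -> lspan H.

Hypothesis mD : measurable (D : set (measurableTypeR R)).

Lemma lspan_integrable (W K : R -> 'M[R[i]]_n) G :
  (forall j, mx_integrable D (fun x => F j x *m W x *m K x)) ->
  lspan G -> mx_integrable D (fun x => G x *m W x *m K x).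
Proof.
move=> iF; elim => [j|G1 H1 _ iG1 _ iH1|M G1 _ iG1|G1 H1 GH _ iG1].
- exact: iF.
- by apply: (eq_mx_integrable mD _ (mx_integrableD mD iG1 iH1)) => x _; rewrite !mulmxDl.
- by apply: (eq_mx_integrable mD _ (mx_integrableMl mD M iG1)) => x _; rewrite !mulmxA.
- by apply: (eq_mx_integrable mD _ iG1) => x /GH ->.
Qed.

End LeftSpan.
Arguments lspan {R n}.
Arguments lspan_gen {R n D F}.
Arguments lspan_add {R n D F G H}.
Arguments lspan_mul {R n D F} M {G}.
Arguments lspan_eq {R n D F G H}.
Arguments lspan_integrable {R n D F} mD {W K G}.

Section ThreeTermRecurrence.
Variables (R : realType) (N : nat) (D : set R).
Variables (F : nat -> R -> 'M[R[i]]_N.+1) (A B C : nat -> 'M[R[i]]_N.+1).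
Hypothesis F_rec : forall x, D x -> forall n,
  (x%:C)%C *: F n x = A n *m F n.-1 x + B n *m F n x + C n *m F n.+1 x.

Lemma lspan_scale_x {G} : lspan D F G -> lspan D F (fun x => (x%:C)%C *: G x).
Proof.
elim => [j|G1 H1 _ IG _ IH|M G1 _ IG|G1 H1 GH _ IG].
- apply: (lspan_eq _ (lspan_add (lspan_add (lspan_mul (A j) (lspan_gen j.-1))
    (lspan_mul (B j) (lspan_gen j))) (lspan_mul (C j) (lspan_gen j.+1)))).
  by move=> x /[!in_setE] /F_rec ->.
- by apply: (lspan_eq _ (lspan_add IG IH)) => x _; rewrite scalerDr.
- by apply: (lspan_eq _ (lspan_mul M IG)) => x _; rewrite scalemxAr.
- by apply: (lspan_eq _ IG) => x /GH ->.
Qed.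

Lemma lspan_moment k : lspan D F (fun x => (x%:C)%C ^+ k *: F 0%N x).
Proof.
elim: k => [|k IHk].
  by apply: (lspan_eq _ (lspan_gen 0%N)) => x _; rewrite expr0 scale1r.
by apply: (lspan_eq _ (lspan_scale_x IHk)) => x _; rewrite scalerA -exprS.
Qed.

Hypothesis C_unit : forall n, C n \in unitmx.

Lemma recurrent_funE n x : D x -> F n x = mxpeval (rec_poly A B C n) x *m F 0%N x.
Proof.
pose FQ k := forall x, D x -> F k x = mxpeval (rec_poly A B C k) x *m F 0%N x.
have step k : FQ k.-1 -> FQ k -> FQ k.+1.
  move=> FQpred FQk y Dy; rewrite rec_polyS mxpeval_rec_step -mulmxA !mulmxBl.
  rewrite -scalemxAl -!mulmxA -FQpred // -FQk // F_rec //.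
  by rewrite [_ + C k *m _]addrC -addrA -opprD addrK mulKmx.
suff [FQn _] : FQ n /\ FQ n.+1 by exact: FQn.
elim: n => [|n [FQn FQn1]]; last by split=> //; apply: step.
have FQ0 : FQ 0%N by move=> y _; rewrite rec_poly0 mxpeval1 mul1mx.
by split=> //; apply: step.
Qed.

End ThreeTermRecurrence.
Arguments lspan_moment {R N D F A B C} F_rec k.
Arguments recurrent_funE {R N D F A B C} F_rec C_unit n x.

Theorem theorem2p1 (R : realType) (N : nat) (a b : \bar R)
  (W : R -> 'M[R[i]]_N.+1) (F : nat -> R -> 'M[R[i]]_N.+1)
  (A B C : nat -> 'M[R[i]]_N.+1) :
  (a < b)%E ->
  weight_matrix a b W ->
  mx_orth_funs a b W F ->
  A 0%N = 0 ->
  (forall n, C n \in unitmx) ->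
  (forall x, oitv a b x -> forall n,
     (x%:C)%C *: F n x = A n *m F n.-1 x + B n *m F n x + C n *m F n.+1 x) ->
  let W' := fun x => F 0%N x *m W x *m adj (F 0%N x) in
  exists Q : nat -> {poly 'M[R[i]]_N.+1},
    [/\ (* (i) *)
        (forall n, (forall x, oitv a b x -> F n x = mxpeval (Q n) x *m F 0%N x)
           /\ (forall P : {poly 'M[R[i]]_N.+1},
                 (forall x, oitv a b x -> F n x = mxpeval P x *m F 0%N x) ->
                 P = Q n)),
        (forall n, size (Q n) = n.+1 /\ lead_coef (Q n) \in unitmx),
        (* (ii) *)
        finite_moments a b W',
        (* (iii) *)
        weight_matrix a b W' /\ mx_orth_polys a b W' Q &
        (* (iv) *)
        (forall n, 'X * Q n = (A n)%:P * Q n.-1 + (B n)%:P * Q n + (C n)%:P * Q n.+1)].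
Proof.
move=> ab [W_int W_psd W_posdef] [F0_det F_int F_orth] _ C_unit F_rec W'.
have mD := measurable_oitv a b.
pose Q : nat -> {poly 'M[R[i]]_N.+1} := rec_poly A B C.
have F_Q := recurrent_funE F_rec C_unit.
have FWF_QWQ i j : {in oitv a b, (fun x => F i x *m W x *m adj (F j x)) =1
    (fun x => mxpeval (Q i) x *m W' x *m adj (mxpeval (Q j) x))}.
  by move=> x /[!in_setE] abx; rewrite (F_Q i) // (F_Q j) // /W' !adjM !mulmxA.
exists Q; split.
- move=> n; split => [|P F_P]; first exact: F_Q.
  have F0_det_inf := ae_oitv_infinite (fun x => \det (F 0%N x) != 0) ab F0_det.
  apply: (mxpoly_eq_on_infinite F0_det_inf) => x [abx F0x_det].
  have F0x_unit : F 0%N x \in unitmx by rewrite unitmxE unitfE.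
  by apply: (can_inj (mulmxK F0x_unit)); rewrite -F_P // -F_Q.
- by move=> n; rewrite size_rec_poly ?lead_coef_rec_poly_unit.
- move=> k; have := lspan_integrable mD (fun j => F_int j 0%N) (lspan_moment F_rec k).
  by apply: (eq_mx_integrable mD) => x _; rewrite /W' -!scalemxAl.
- split; first split.
  + exact: F_int 0%N 0%N.
  + by move=> x /W_psd; apply: psd_congr.
  + apply: (filterS2 (ae_filter_ringOfSetsType _) _ W_posdef F0_det).
    move=> x W_pd F0x_det abx.
    by apply: posdef_congr (W_pd abx); rewrite unitmxE unitfE F0x_det.
  split => [n|n|i j|i j ij]; [exact: size_rec_poly | exact: lead_coef_rec_poly_unit | |].
  + exact: (eq_mx_integrable mD (FWF_QWQ i j) (F_int i j)).
  + by rewrite -(eq_mx_integral (FWF_QWQ i j)) F_orth.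
- exact: rec_poly_recurrence.
Qed.
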